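(* Consider a network of $N$ nodes where each node performs a dichotomic measurement with outcomes in $\{0,1\}$, producing a distribution $p(x_1,\dots,x_N)$, and let $C$ be the $N\times N$ real matrix with entries $C_{\alpha\beta}=p(x_\alpha=0,x_\beta=0)-p(x_\alpha=0)p(x_\beta=0)$ for $\alpha\neq\beta$ and $C_{\alpha\alpha}=p(x_\alpha=0)(1-p(x_\alpha=0))$ (so that the covariance matrix is $\Gamma(\mathbf{v})=C\otimes(\mathbb{1}-\sigma_x)$). If the comparison matrix $M(C)$ has a negative eigenvalue, then the distribution $p$ is incompatible with a quantum network in which all sources are bipartite (each source distributes a quantum state to two nodes).
   Context: Quantum network: sources $m$ independently prepare states $\varrho_m$, whose subsystems go to the nodes in a set $\mathcal{C}_m$; each node $n$ performs a POVM $\{A^{(n)}_x\}$ on its received subsystems, and $p(x_1,\dots,x_N)=\mathrm{tr}[(A^{(1)}_{x_1}\otimes\cdots\otimes A^{(N)}_{x_N})\varrho_1\otimes\cdots\otimes\varrho_M]$. The comparison matrix of an $N\times N$ matrix $X$ is defined by $(M[X])_{ii}=|X_{ii}|$ and $(M[X])_{ij}=-|X_{ij}|$ for $i\neq j$. The covariance matrix is $\Gamma(\mathbf{v})=E(\mathbf{v}\mathbf{v}^\dagger)-E(\mathbf{v})E(\mathbf{v})^\dagger$ with $\mathbf{v}_{x_1,\dots,x_N}=|x_1\rangle+\dots+|x_N\rangle$, $|x_n\rangle$ a basis vector of mutually orthogonal spaces $\mathcal{V}_n\cong\mathbb{C}^2$. *)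

From HB Require Import structures.
From mathcomp Require Import all_boot all_order all_algebra.
Set Implicit Arguments. Unset Strict Implicit. Unset Printing Implicit Defensive.
Import Order.TTheory GRing.Theory Num.Theory.
Local Open Scope ring_scope.

(* Operators on a finite-dimensional
   Hilbert space with orthonormal basis indexed by a finType T are
   represented by their matrix entries T -> T -> C. *)

Section Quantum.
Variable C : numClosedFieldType.

Definition op (T : finType) := T -> T -> C.

Definition psd (T : finType) (A : op T) : Prop :=
  (forall i j, A j i = (A i j)^*) /\
  (forall u : T -> C, 0 <= \sum_i \sum_j (u i)^* * A i j * u j).

Definition trace (T : finType) (A : op T) : C := \sum_i A i i.

Definition density (T : finType) (rho : op T) : Prop :=
  psd rho /\ trace rho = 1.

Definition povm (X T : finType) (A : X -> op T) : Prop :=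
  (forall x, psd (A x)) /\
  (forall i j, \sum_x A x i j = (i == j)%:R).

(* ---- Bipartite quantum network ----
   N nodes, M sources; source m emits a bipartite state on two subsystems,
   labelled (m,false) and (m,true) ("half-edges"), sent to nodes
   node (m,false) and node (m,true).  Every subsystem has dimension d. *)

Definition halfedge (M : nat) := ('I_M * bool)%type.

(* basis of the global Hilbert space: one basis index per subsystem *)
Definition gconf (M d : nat) := {ffun halfedge M -> 'I_d}.

(* basis of the Hilbert space held by node n: subsystems received by n *)
Definition lconf (N M d : nat) (node : halfedge M -> 'I_N) (n : 'I_N) :=
  {ffun {s : halfedge M | node s == n} -> 'I_d}.

Definition restr (N M d : nat) (node : halfedge M -> 'I_N) (n : 'I_N)
  (g : gconf M d) : lconf d node n := [ffun s => g (val s)].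

(* matrix entries of rho_1 (x) ... (x) rho_M *)
Definition global_state (M d : nat) (rho : 'I_M -> op ('I_d * 'I_d)%type)
  : op (gconf M d) :=
  fun g g' => \prod_(m < M) rho m (g (m, false), g (m, true))
                                   (g' (m, false), g' (m, true)).

(* matrix entries of A^(1)_{x_1} (x) ... (x) A^(N)_{x_N} *)
Definition global_meas (N M d : nat) (node : halfedge M -> 'I_N)
  (A : forall n : 'I_N, 'I_2 -> op (lconf d node n)) (x : {ffun 'I_N -> 'I_2})
  : op (gconf M d) :=
  fun g g' => \prod_(n < N) A n (x n) (restr node n g) (restr node n g').

(* p(x) = tr[(A (x) ... (x) A) rho_1 (x) ... (x) rho_M] *)
Definition network_prob (N M d : nat) (node : halfedge M -> 'I_N)
  (rho : 'I_M -> op ('I_d * 'I_d)%type)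
  (A : forall n : 'I_N, 'I_2 -> op (lconf d node n)) (x : {ffun 'I_N -> 'I_2}) : C :=
  \sum_g \sum_g' global_meas A x g g' * global_state rho g' g.

Definition bipartite_qnet_compatible (N : nat) (p : {ffun 'I_N -> 'I_2} -> C)
  : Prop :=
  exists (M d : nat) (node : halfedge M -> 'I_N),
    (forall m : 'I_M, node (m, false) != node (m, true)) /\
    exists (rho : 'I_M -> op ('I_d * 'I_d)%type)
           (A : forall n : 'I_N, 'I_2 -> op (lconf d node n)),
      (forall m, density (rho m)) /\ (forall n, povm (A n)) /\
      (forall x, p x = network_prob rho A x).

Definition marg1 (N : nat) (p : {ffun 'I_N -> 'I_2} -> C) (a : 'I_N) : C :=
  \sum_(x : {ffun 'I_N -> 'I_2} | x a == 0%R) p x.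

Definition marg2 (N : nat) (p : {ffun 'I_N -> 'I_2} -> C) (a b : 'I_N) : C :=
  \sum_(x : {ffun 'I_N -> 'I_2} | (x a == 0%R) && (x b == 0%R)) p x.

Definition corr_mx (N : nat) (p : {ffun 'I_N -> 'I_2} -> C) : 'M[C]_N :=
  \matrix_(a, b) if a == b then marg1 p a * (1 - marg1 p a)
                 else marg2 p a b - marg1 p a * marg1 p b.

Definition comparison_mx (N : nat) (X : 'M[C]_N) : 'M[C]_N :=
  \matrix_(i, j) if i == j then `|X i i| else - `|X i j|.

End Quantum.

From HB Require Import structures.
From mathcomp Require Import all_boot all_order all_algebra.
From mathcomp Require Import ring.
From Stdlib Require Import FunctionalExtensionality.
Set Implicit Arguments. Unset Strict Implicit. Unset Printing Implicit Defensive.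
Import Order.TTheory GRing.Theory Num.Theory.
Local Open Scope ring_scope.

(* Purify every source, so that the network state becomes a unit vector [Psi]
   on the nodes' systems and the ancillas, and let [v_a = (E_a - p_a) Psi],
   where [E_a] is the effect of outcome 0 at node [a]. Then [C_ab = <v_a, v_b>]
   for [a != b] and [C_aa >= |v_a|^2]. Since [v_a] is orthogonal to [Psi] and
   only involves the sources adjacent to [a], [<v_a, v_b>] only sees the
   sources shared by [a] and [b]. A bipartite source is shared by at most two
   nodes, so the parts of [v_a] seen by the various [b] are orthogonal, and
   Bessel's inequality, Cauchy-Schwarz and AM-GM give
   [sum_(a != b) |C_ab| t_a t_b <= sum_a C_aa t_a^2] for all [t >= 0].
   Taking [t = |x|] for an eigenvector [x] of [M(C)] shows that the
   eigenvalue is nonnegative. *)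

Section DotProduct.
Variables (C : numClosedFieldType) (Z : finType).
Implicit Types (u v w : Z -> C) (c : C).

Definition dotf u v : C := \sum_z (u z)^* * v z.
Definition subf u v : Z -> C := fun z => u z - v z.
Definition scalef c u : Z -> C := fun z => c * u z.

Lemma dotf_ge0 u : 0 <= dotf u u.
Proof. by apply: sumr_ge0 => z _; rewrite mulrC mul_conjC_ge0. Qed.

Lemma conj_dotf u v : (dotf u v)^* = dotf v u.
Proof.
by rewrite rmorph_sum; apply: eq_bigr => z _; rewrite rmorphM /= conjCK mulrC.
Qed.

Lemma dotf_sumr (I : Type) (r : seq I) (P : pred I) (F : I -> Z -> C) u :
  dotf u (fun z => \sum_(i <- r | P i) F i z) = \sum_(i <- r | P i) dotf u (F i).
Proof. by rewrite /dotf; under eq_bigr do rewrite mulr_sumr; exact: exchange_big. Qed.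

Lemma dotf_suml (I : Type) (r : seq I) (P : pred I) (F : I -> Z -> C) u :
  dotf (fun z => \sum_(i <- r | P i) F i z) u = \sum_(i <- r | P i) dotf (F i) u.
Proof.
rewrite -conj_dotf dotf_sumr rmorph_sum; apply: eq_bigr => i _; exact: conj_dotf.
Qed.

Lemma dotf_subr u v w : dotf u (subf v w) = dotf u v - dotf u w.
Proof. by rewrite /dotf -sumrB; apply: eq_bigr => z _; rewrite mulrBr. Qed.

Lemma dotf_subl u v w : dotf (subf u v) w = dotf u w - dotf v w.
Proof. by rewrite /dotf -sumrB; apply: eq_bigr => z _; rewrite rmorphB mulrBl. Qed.

Lemma dotf_scaler c u v : dotf u (scalef c v) = c * dotf u v.
Proof. by rewrite /dotf mulr_sumr; apply: eq_bigr => z _; rewrite mulrCA. Qed.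

Lemma dotf_scalel c u v : dotf (scalef c u) v = c^* * dotf u v.
Proof. by rewrite /dotf mulr_sumr; apply: eq_bigr => z _; rewrite rmorphM mulrA. Qed.

Lemma dotf0r u : dotf u (fun _ => 0) = 0.
Proof. by rewrite /dotf big1 // => z _; rewrite mulr0. Qed.

Lemma dotf_eq0 u : dotf u u = 0 -> forall z, u z = 0.
Proof.
move=> u0 z; apply/eqP; rewrite -mul_conjC_eq0 mulrC; apply/eqP.
by apply: (psumr_eq0P _ u0) => // i _; rewrite mulrC mul_conjC_ge0.
Qed.

(* Expand the square norm of [dotf u u *: v - dotf u v *: u]. *)
Lemma CauchySchwarz_dotf u v : `|dotf u v| ^+ 2 <= dotf u u * dotf v v.
Proof.
set a := dotf u u; set b := dotf u v.
have a_ge0 : 0 <= a := dotf_ge0 u.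
have [a0|a_neq0] := eqVneq a 0.
  have -> : b = 0 by rewrite /b /dotf big1 // => z _; rewrite (dotf_eq0 a0) conjC0 mul0r.
  by rewrite normr0 expr0n /= a0 mul0r.
have := dotf_ge0 (subf (scalef a v) (scalef b u)).
rewrite dotf_subl !dotf_subr !dotf_scalel !dotf_scaler -/a -/b -(conj_dotf u v) -/b.
rewrite (conj_Creal (ger0_real a_ge0)).
have -> : a * (a * dotf v v) - a * (b * b^*) - (b^* * (a * b) - b^* * (b * a))
   = a * (a * dotf v v - b * b^*) by ring.
by rewrite pmulr_rge0 ?lt_def ?a_neq0 // subr_ge0 normCK.
Qed.

End DotProduct.

Lemma amgm_cross_le (C : numClosedFieldType) (x y c s t : C) :
  0 <= x -> 0 <= y -> 0 <= c -> 0 <= s -> 0 <= t -> c ^+ 2 <= x * y ->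
  2 * c * s * t <= x * s ^+ 2 + y * t ^+ 2.
Proof.
move=> x0 y0 c0 s0 t0 cxy.
have lhs_ge0 : 0 <= 2 * c * s * t by rewrite !mulr_ge0.
have rhs_ge0 : 0 <= x * s ^+ 2 + y * t ^+ 2 by rewrite addr_ge0 // mulr_ge0 // exprn_ge0.
rewrite -ler_sqr ?nnegrE //.
apply: (@le_trans _ _ (4%:R * (x * y) * s ^+ 2 * t ^+ 2)).
  have -> : (2 * c * s * t) ^+ 2 = 4%:R * c ^+ 2 * s ^+ 2 * t ^+ 2 by ring.
  by rewrite !ler_wpM2r ?exprn_ge0 // ler_wpM2l.
rewrite -subr_ge0.
have -> : (x * s ^+ 2 + y * t ^+ 2) ^+ 2 - 4%:R * (x * y) * s ^+ 2 * t ^+ 2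
  = (x * s ^+ 2 - y * t ^+ 2) ^+ 2 by ring.
by apply: real_exprn_even_ge0; rewrite // rpredB // ger0_real // mulr_ge0 // exprn_ge0.
Qed.

Lemma sum_offdiag_swap (R : nmodType) (I : finType) (F : I -> I -> R) :
  \sum_a \sum_(b | b != a) F a b = \sum_a \sum_(b | b != a) F b a.
Proof.
rewrite (exchange_big_dep xpredT) //=; apply: eq_bigr => b _.
by apply: eq_bigl => a; rewrite eq_sym.
Qed.

Section Decoupling.
Variables (C : numClosedFieldType) (Z I S : finType).
Variable proj : {set S} -> (Z -> C) -> Z -> C.
Variables (v : I -> Z -> C) (supp : I -> {set S}).
Hypothesis proj_adj : forall T u w, dotf (proj T u) w = dotf u (proj T w).
Hypothesis proj_comp : forall T U w, proj T (proj U w) = proj (T :|: U) w.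
Hypothesis proj_setT : forall a, proj setT (v a) = fun _ => 0.
Hypothesis proj_supp : forall a, proj (~: supp a) (v a) = v a.
Hypothesis supp3_disjoint : forall a b b', b != a -> b' != a -> b != b' ->
  supp a :&: supp b :&: supp b' = set0.

Definition shared_part a b := proj (~: (supp a :&: supp b)) (v a).

Lemma dotf_shared_parts a b : dotf (v a) (v b) = dotf (shared_part a b) (shared_part b a).
Proof.
rewrite /shared_part (setIC (supp b)) proj_adj proj_comp setUid setCI -proj_comp.
by rewrite proj_supp -proj_adj proj_supp.
Qed.

Lemma dotf_shared_part a b :
  dotf (shared_part a b) (v a) = dotf (shared_part a b) (shared_part a b).
Proof. by rewrite /shared_part proj_adj [in RHS]proj_adj proj_comp setUid. Qed.

Lemma shared_parts_orth a b b' : b != a -> b' != a -> b != b' ->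
  dotf (shared_part a b) (shared_part a b') = 0.
Proof.
move=> ba b'a bb'; rewrite /shared_part proj_adj proj_comp -setCI setIACA setIid.
by rewrite setIA supp3_disjoint // setC0 proj_setT dotf0r.
Qed.

(* Bessel's inequality for the orthogonal family [shared_part a b], b != a. *)
Lemma sum_shared_parts_le a :
  \sum_(b | b != a) dotf (shared_part a b) (shared_part a b) <= dotf (v a) (v a).
Proof.
set W := fun z => \sum_(b | b != a) shared_part a b z.
set X := \sum_(b | b != a) dotf (shared_part a b) (shared_part a b).
have WvX : dotf W (v a) = X.
  by rewrite /W dotf_suml; apply: eq_bigr => b _; exact: dotf_shared_part.
have vWX : dotf (v a) W = X.
  rewrite -conj_dotf WvX /X rmorph_sum; apply: eq_bigr => b _.
  exact/conj_Creal/ger0_real/dotf_ge0.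
have WWX : dotf W W = X.
  rewrite {1}/W dotf_suml; apply: eq_bigr => b ba.
  rewrite /W dotf_sumr (bigD1 b) //= big1 ?addr0 // => b' /andP[b'a b'b].
  by rewrite shared_parts_orth // eq_sym.
have := dotf_ge0 (subf (v a) W).
by rewrite dotf_subl !dotf_subr WvX vWX WWX subrr subr0 subr_ge0.
Qed.

Lemma sum_offdiag_dotf_le (t : I -> C) : (forall a, 0 <= t a) ->
  \sum_a \sum_(b | b != a) `|dotf (v a) (v b)| * (t a * t b)
    <= \sum_a dotf (v a) (v a) * t a ^+ 2.
Proof.
move=> t_ge0; set x := fun a b => dotf (shared_part a b) (shared_part a b).
have amgm a b : b != a ->
    2 * `|dotf (v a) (v b)| * t a * t b <= x a b * t a ^+ 2 + x b a * t b ^+ 2.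
  move=> ba; apply: amgm_cross_le; rewrite ?dotf_ge0 //.
  by rewrite dotf_shared_parts CauchySchwarz_dotf.
have sym : \sum_a \sum_(b | b != a) (x a b * t a ^+ 2 + x b a * t b ^+ 2)
    = 2 * \sum_a \sum_(b | b != a) x a b * t a ^+ 2.
  rewrite mulr_natl mulr2n [X in _ = _ + X]sum_offdiag_swap -big_split /=.
  by apply: eq_bigr => a _; rewrite big_split.
suff : 2 * (\sum_a \sum_(b | b != a) `|dotf (v a) (v b)| * (t a * t b))
    <= 2 * (\sum_a \sum_(b | b != a) x a b * t a ^+ 2).
  rewrite ler_pM2l ?ltr0n // => /le_trans; apply; apply: ler_sum => a _.
  by rewrite -mulr_suml ler_wpM2r ?exprn_ge0 ?sum_shared_parts_le.
rewrite -sym mulr_sumr; apply: ler_sum => a _; rewrite mulr_sumr.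
by apply: ler_sum => b ba; move: (amgm a b ba); rewrite -!mulrA.
Qed.

End Decoupling.

Lemma sum_mul_delta_r (R : nzSemiRingType) (T : finType) (F : T -> R) (b : T) :
  \sum_k F k * (k == b)%:R = F b.
Proof.
rewrite (bigD1 b) //= eqxx mulr1 big1 ?addr0 // => k kb.
by rewrite (negbTE kb) mulr0.
Qed.

Lemma sum_mul_delta_l (R : nzSemiRingType) (T : finType) (F : T -> R) (a : T) :
  \sum_k (a == k)%:R * F k = F a.
Proof.
rewrite (bigD1 a) //= eqxx mul1r big1 ?addr0 // => k ka.
by rewrite eq_sym (negbTE ka) mul0r.
Qed.

Section GconfSum.
Variables (M d : nat).

Definition gconf_pairs (g : gconf M d) : {ffun 'I_M -> 'I_d * 'I_d} :=
  [ffun m => (g (m, false), g (m, true))].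
Definition pairs_gconf (f : {ffun 'I_M -> 'I_d * 'I_d}) : gconf M d :=
  [ffun s => if s.2 then (f s.1).2 else (f s.1).1].

Lemma gconf_pairsK : cancel gconf_pairs pairs_gconf.
Proof. by move=> g; apply/ffunP => -[m [|]]; rewrite !ffunE. Qed.

Lemma pairs_gconfK : cancel pairs_gconf gconf_pairs.
Proof. by move=> f; apply/ffunP => m; rewrite !ffunE /=; case: (f m). Qed.

Lemma sum_gconf_prod (R : comNzRingType) (G : 'I_M -> 'I_d * 'I_d -> R) :
  \sum_(g : gconf M d) \prod_m G m (g (m, false), g (m, true)) =
  \prod_m \sum_k G m k.
Proof.
rewrite bigA_distr_bigA (reindex gconf_pairs) /=; last first.
  by exists pairs_gconf => x _; [exact: gconf_pairsK | exact: pairs_gconfK].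
by apply: eq_bigr => g _; apply: eq_bigr => m _; rewrite ffunE.
Qed.

End GconfSum.

(* [psi m] is a purification of the state of source [m] (see [rho_L] below),
   with ancilla basis [J]; [Psi] is the product of the [psi m]. *)
Section Purification.
Variables (C : numClosedFieldType) (M d : nat) (J : finType).
Local Notation K := ('I_d * 'I_d)%type.
Variable L : 'I_M -> K -> J -> C.
Hypothesis L_norm : forall m, \sum_k \sum_j L m k j * (L m k j)^* = 1.

Definition pconf := (gconf M d * {ffun 'I_M -> J})%type.
Implicit Types (z : pconf) (T U : {set 'I_M}) (w : pconf -> C).

Definition src_conf z m : K * J := ((z.1 (m, false), z.1 (m, true)), z.2 m).
Definition psi m (kj : K * J) := L m kj.1 kj.2.
Definition Psi z := \prod_m psi m (src_conf z m).
Definition Psi_on T z := \prod_m (if m \in T then psi m (src_conf z m) else 1).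

(* [srcproj T] is the orthogonal projection onto the states in which every
   source of [T] is in its pure state [psi m]. *)
Definition srcproj_entry T m (k k' : K * J) :=
  if m \in T then psi m k * (psi m k')^* else (k == k')%:R.
Definition srcproj_kernel T z z' :=
  \prod_m srcproj_entry T m (src_conf z m) (src_conf z' m).
Definition srcproj T w : pconf -> C := fun z => \sum_z' srcproj_kernel T z z' * w z'.

Lemma sum_pconf_prod (F : 'I_M -> K * J -> C) :
  \sum_z \prod_m F m (src_conf z m) = \prod_m \sum_k F m k.
Proof.
rewrite -(pair_big xpredT xpredT (fun g h => \prod_m F m (src_conf (g, h) m))) /=.
under eq_bigr => g _.
  rewrite -(bigA_distr_bigA (fun m j => F m ((g (m, false), g (m, true)), j))).
over.
rewrite /= (sum_gconf_prod (fun m k => \sum_j F m (k, j))).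
apply: eq_bigr => m _.
by rewrite (pair_big xpredT xpredT (fun k j => F m (k, j))) /=; apply: eq_bigr => -[].
Qed.

Lemma psi_norm m : \sum_k (psi m k)^* * psi m k = 1.
Proof.
rewrite -(L_norm m) (pair_big xpredT xpredT (fun k j => L m k j * (L m k j)^*)) /=.
by apply: eq_bigr => -[k j] _; rewrite mulrC.
Qed.

Lemma srcproj_entry_comp T U m a b :
  \sum_k srcproj_entry T m a k * srcproj_entry U m k b = srcproj_entry (T :|: U) m a b.
Proof.
rewrite /srcproj_entry in_setU; case: (m \in T); case: (m \in U) => /=.
- transitivity (psi m a * (\sum_k (psi m k)^* * psi m k) * (psi m b)^*).
    by rewrite mulr_sumr mulr_suml; apply: eq_bigr => k _; ring.
  by rewrite psi_norm mulr1.
- by rewrite sum_mul_delta_r.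
- by rewrite (eq_bigr (fun k => (a == k)%:R * (psi m k * (psi m b)^*))) ?sum_mul_delta_l.
- by rewrite (eq_bigr (fun k => (a == k)%:R * (k == b)%:R)) // sum_mul_delta_l.
Qed.

Lemma srcproj_kernel_comp T U z z'' :
  \sum_z' srcproj_kernel T z z' * srcproj_kernel U z' z'' = srcproj_kernel (T :|: U) z z''.
Proof.
under eq_bigr do rewrite /srcproj_kernel -big_split /=.
rewrite (sum_pconf_prod (fun m k => srcproj_entry T m (src_conf z m) k *
                                     srcproj_entry U m k (src_conf z'' m))).
by apply: eq_bigr => m _; rewrite srcproj_entry_comp.
Qed.

Lemma srcproj_comp T U w : srcproj T (srcproj U w) = srcproj (T :|: U) w.
Proof.
apply: functional_extensionality => z; rewrite /srcproj.
under eq_bigr do rewrite mulr_sumr.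
rewrite exchange_big /=; apply: eq_bigr => z'' _.
rewrite -srcproj_kernel_comp mulr_suml.
by apply: eq_bigr => z' _; rewrite mulrA.
Qed.

Lemma conj_srcproj_kernel T z z' : (srcproj_kernel T z z')^* = srcproj_kernel T z' z.
Proof.
rewrite rmorph_prod; apply: eq_bigr => m _; rewrite /srcproj_entry.
case: (m \in T); first by rewrite rmorphM /= conjCK mulrC.
by rewrite /= conjC_nat eq_sym.
Qed.

Lemma srcproj_adj T u w : dotf (srcproj T u) w = dotf u (srcproj T w).
Proof.
rewrite /dotf /srcproj.
under eq_bigr do rewrite rmorph_sum mulr_suml.
rewrite exchange_big /=; apply: eq_bigr => z' _.
rewrite mulr_sumr; apply: eq_bigr => z _.
by rewrite rmorphM /= conj_srcproj_kernel; ring.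
Qed.

Lemma srcproj_setT w : srcproj setT w = fun z => Psi z * dotf Psi w.
Proof.
apply: functional_extensionality => z; rewrite /srcproj /dotf mulr_sumr.
apply: eq_bigr => z' _; rewrite /srcproj_kernel /srcproj_entry.
under eq_bigr do rewrite in_setT.
by rewrite big_split /= -rmorph_prod mulrA.
Qed.

Lemma dotf_Psi : dotf Psi Psi = 1.
Proof.
rewrite /dotf /Psi.
under eq_bigr do rewrite rmorph_prod -big_split /=.
rewrite (sum_pconf_prod (fun m k => (psi m k)^* * psi m k)).
by rewrite big1 // => m _; rewrite psi_norm.
Qed.

Lemma Psi_split T z : Psi z = Psi_on T z * Psi_on (~: T) z.
Proof.
rewrite /Psi /Psi_on -big_split /=; apply: eq_bigr => m _.
by rewrite in_setC; case: (m \in T); rewrite ?mulr1 ?mul1r.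
Qed.

Lemma srcproj_kernel_eq0 T z z' :
  ~~ [forall m, (m \notin T) ==> (src_conf z m == src_conf z' m)] ->
  srcproj_kernel T z z' = 0.
Proof.
rewrite negb_forall => /existsP[m]; rewrite negb_imply => /andP[mT ne].
by rewrite /srcproj_kernel (bigD1 m) //= /srcproj_entry (negbTE mT) (negbTE ne) mul0r.
Qed.

Lemma srcproj_Psi_on T (f : pconf -> C) :
  (forall z z', (forall m, m \notin T -> src_conf z m = src_conf z' m) -> f z = f z') ->
  srcproj T (fun z => Psi_on T z * f z) = fun z => Psi_on T z * f z.
Proof.
move=> f_off; apply: functional_extensionality => z; rewrite /srcproj.
transitivity (\sum_z' srcproj_kernel T z z' * Psi_on T z' * f z).
  apply: eq_bigr => z' _; rewrite mulrA.
  have [/forallP agree|/srcproj_kernel_eq0 ->] :=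
    boolP [forall m, (m \notin T) ==> (src_conf z m == src_conf z' m)]; last first.
    by rewrite !mul0r.
  by rewrite (f_off z' z) // => m mT; have /implyP/(_ mT)/eqP := agree m.
rewrite -mulr_suml; congr (_ * _).
under eq_bigr do rewrite /srcproj_kernel /Psi_on -big_split /=.
rewrite (sum_pconf_prod (fun m k => srcproj_entry T m (src_conf z m) k *
                                     (if m \in T then psi m k else 1))).
apply: eq_bigr => m _; rewrite /srcproj_entry; case: (m \in T).
  transitivity (psi m (src_conf z m) * \sum_k (psi m k)^* * psi m k).
    by rewrite mulr_sumr; apply: eq_bigr => k _; ring.
  by rewrite psi_norm mulr1.
by rewrite (eq_bigr (fun k => (src_conf z m == k)%:R * 1)) ?sum_mul_delta_l.
Qed.

End Purification.

Section NodeOperators.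
Variables (C : numClosedFieldType) (N M d : nat) (node : halfedge M -> 'I_N).
Local Notation G := (gconf M d).
Local Notation lconf := (lconf d node).
Local Notation restr := (restr node).
Implicit Types (g : G) (Q : pred 'I_N) (a b : 'I_N).

Definition agree_on Q g g' : bool := [forall s, Q (node s) ==> (g s == g' s)].

Definition upd {a} g (l : lconf a) : G :=
  [ffun s => if (insub s : option {s : halfedge M | node s == a}) is Some s'
             then l s' else g s].

Definition adj_sources a : {set 'I_M} :=
  [set m | (node (m, false) == a) || (node (m, true) == a)].

Lemma adj_sources3_disjoint a b b' : b != a -> b' != a -> b != b' ->
  adj_sources a :&: adj_sources b :&: adj_sources b' = set0.
Proof.
move=> ba b'a bb'; apply/setP => m; rewrite !inE.
apply/negbTE/negP => /andP[/andP[Ha Hb] Hb'].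
move: ba b'a bb'.
by case/orP: Ha => /eqP <-; case/orP: Hb => /eqP <-; case/orP: Hb' => /eqP <-;
  rewrite ?eqxx.
Qed.

(* [B] acting on the subsystems of node [a], tensored with the identity elsewhere. *)
Definition node_op a (B : op C (lconf a)) g g' : C :=
  B (restr a g) (restr a g') * (agree_on (predC1 a) g g')%:R.

Definition node_op2 a b (Ba : op C (lconf a)) (Bb : op C (lconf b)) g g' : C :=
  Ba (restr a g) (restr a g') * Bb (restr b g) (restr b g') *
  (agree_on (fun n => (n != a) && (n != b)) g g')%:R.

Lemma agree_on_refl Q g : agree_on Q g g.
Proof. by apply/forallP => s; rewrite eqxx implybT. Qed.

Lemma agree_onC Q g g' : agree_on Q g g' = agree_on Q g' g.
Proof. by apply/forallP/forallP => H s; have := H s; rewrite eq_sym. Qed.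

Lemma restr_upd a g (l : lconf a) : restr a (upd g l) = l.
Proof. by apply/ffunP => s; rewrite !ffunE valK. Qed.

Lemma upd_restr a g g' : agree_on (predC1 a) g g' -> upd g (restr a g') = g'.
Proof.
move=> /forallP H; apply/ffunP => s; rewrite !ffunE.
case: insubP => [s' _ <-|]; first by rewrite ffunE.
by move=> nsa; have /implyP/(_ _)/eqP := H s; apply; rewrite /= nsa.
Qed.

Lemma agree_on_upd a g (l : lconf a) : agree_on (predC1 a) g (upd g l).
Proof.
apply/forallP => s; apply/implyP => /= nsa.
by rewrite ffunE insubF //; exact/negbTE.
Qed.

Lemma upd_upd a g (l l' : lconf a) : upd (upd g l) l' = upd g l'.
Proof. by apply/ffunP => s; rewrite !ffunE; case: insubP. Qed.

Lemma restr_upd_other a b g (l : lconf a) : a != b -> restr b (upd g l) = restr b g.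
Proof.
move=> ab; apply/ffunP => s; rewrite !ffunE insubF //.
by rewrite (eqP (valP s)); apply/negbTE; rewrite eq_sym.
Qed.

Lemma sum_agree_on (R : nzSemiRingType) a g (F : G -> R) :
  \sum_(g' | agree_on (predC1 a) g g') F g' = \sum_(l : lconf a) F (upd g l).
Proof.
rewrite (reindex_onto (upd g) (restr a)); last by move=> g' /upd_restr.
by apply: eq_bigl => l; rewrite agree_on_upd restr_upd eqxx.
Qed.

Lemma sum_upd (F : G -> C) a :
  \sum_g \sum_(l : lconf a) F (upd g l) = #|lconf a|%:R * \sum_g F g.
Proof.
transitivity (\sum_g \sum_g' (agree_on (predC1 a) g g')%:R * F g').
  apply: eq_bigr => g _; rewrite -sum_agree_on big_mkcond.
  by apply: eq_bigr => g' _; case: agree_on; rewrite ?mul1r ?mul0r.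
rewrite exchange_big mulr_sumr; apply: eq_bigr => g' _ /=.
rewrite -mulr_suml; congr (_ * _).
transitivity (\sum_(g | agree_on (predC1 a) g' g) (1 : C)).
  by rewrite [RHS]big_mkcond; apply: eq_bigr => g _; rewrite agree_onC; case: agree_on.
by rewrite sum_agree_on sumr_const; congr (_%:R); apply: eq_card.
Qed.

Lemma prod_restr_eq Q g g' :
  \prod_(n | Q n) ((restr n g == restr n g')%:R : C) = (agree_on Q g g')%:R.
Proof.
have [H|] := boolP (agree_on Q g g').
  rewrite big1 // => n Qn; suff -> : restr n g = restr n g' by rewrite eqxx.
  apply/ffunP => s; rewrite !ffunE; move/forallP: H => /(_ (val s))/implyP H.
  by apply/eqP/H; rewrite (eqP (valP s)).
rewrite negb_forall => /existsP[s]; rewrite negb_imply => /andP[Qs ne].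
rewrite (bigD1 (node s) Qs) /= (_ : (restr (node s) g == _) = false) ?mul0r //.
apply/negbTE; apply: contra ne => /eqP/ffunP/(_ (Sub s (eqxx (node s)))).
by rewrite !ffunE => ->.
Qed.

Lemma node_op_adj a (B : op C (lconf a)) :
  (forall i j, B j i = (B i j)^*) -> forall g g', node_op B g' g = (node_op B g g')^*.
Proof. by move=> hB g g'; rewrite /node_op rmorphM /= conjC_nat agree_onC -hB. Qed.

Lemma sum_node_op a (B : op C (lconf a)) g (F : G -> C) :
  \sum_g' node_op B g g' * F g' = \sum_(l : lconf a) B (restr a g) l * F (upd g l).
Proof.
transitivity (\sum_(g' | agree_on (predC1 a) g g') B (restr a g) (restr a g') * F g').
  rewrite [RHS]big_mkcond; apply: eq_bigr => g' _; rewrite /node_op.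
  by case: agree_on; rewrite ?mulr1 ?mulr0 ?mul0r.
by rewrite sum_agree_on; apply: eq_bigr => l _; rewrite restr_upd.
Qed.

(* Each [upd g] slice carries a nonnegative quadratic form of [B]; summing
   over all [g] counts every configuration [#|lconf a|] times. *)
Lemma node_op_psd a (B : op C (lconf a)) : psd B ->
  forall w : G -> C, 0 <= \sum_g \sum_g' (w g)^* * node_op B g g' * w g'.
Proof.
move=> [_ B_ge0] w.
set S := fun g => \sum_(l : lconf a) (w g)^* * B (restr a g) l * w (upd g l).
have -> : \sum_g \sum_g' (w g)^* * node_op B g g' * w g' = \sum_g S g.
  apply: eq_bigr => g _; under eq_bigr do rewrite -mulrA.
  by rewrite -mulr_sumr sum_node_op mulr_sumr; apply: eq_bigr => l _; rewrite mulrA.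
have slice_ge0 g : 0 <= \sum_(l : lconf a) S (upd g l).
  have := B_ge0 (fun l => w (upd g l)); congr (_ <= _).
  by apply: eq_bigr => l _; apply: eq_bigr => l' _; rewrite /S restr_upd upd_upd.
have [g0 _ | G0] := pickP (@predT G); last by rewrite big1 // => g; have := G0 g.
have : 0 <= \sum_g \sum_(l : lconf a) S (upd g l) by exact: sumr_ge0.
rewrite sum_upd pmulr_rge0 // ltr0n.
by apply/card_gt0P; exists (restr a g0).
Qed.

Lemma node_op_id a g g' : node_op (fun l l' : lconf a => (l == l')%:R) g g' = (g == g')%:R.
Proof.
rewrite /node_op; have [->|ne] := eqVneq g g'; first by rewrite !eqxx mul1r agree_on_refl.
have [H|] := boolP (agree_on _ g g'); rewrite ?mulr0 // mulr1.
suff /negbTE -> : restr a g != restr a g' by [].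
apply: contra ne => /eqP hr; apply/eqP/ffunP => s.
have [hs|hs] := boolP (node s == a).
  by have /ffunP/(_ (Sub s hs)) := hr; rewrite !ffunE.
by move/forallP: H => /(_ s)/implyP/(_ hs)/eqP.
Qed.

Lemma agree_on_upd_other a b g g' (l : lconf a) : a != b ->
  agree_on (predC1 b) (upd g l) g' =
  (l == restr a g') && agree_on (fun n => (n != a) && (n != b)) g g'.
Proof.
move=> ab; apply/idP/idP.
  move=> /forallP H; apply/andP; split.
    apply/eqP/ffunP => s; rewrite ffunE.
    by have := H (val s); rewrite /= (eqP (valP s)) ab /= ffunE valK => /eqP.
  apply/forallP => s; apply/implyP => /andP[sa sb].
  by have := H s; rewrite /= sb /= ffunE insubF ?(negbTE sa).
move=> /andP[/eqP -> /forallP H]; apply/forallP => s; apply/implyP => /= sb.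
rewrite ffunE; case: insubP => [s' _ <-|sa]; first by rewrite ffunE.
by have := H s; rewrite sa sb.
Qed.

Lemma node_op_comp a b (Ba : op C (lconf a)) (Bb : op C (lconf b)) g1 g2 :
  a != b -> \sum_g node_op Ba g1 g * node_op Bb g g2 = node_op2 Ba Bb g1 g2.
Proof.
move=> ab; rewrite sum_node_op.
transitivity (\sum_(l : lconf a) (Ba (restr a g1) l * (Bb (restr b g1) (restr b g2) *
   (agree_on (fun n => (n != a) && (n != b)) g1 g2)%:R)) * (l == restr a g2)%:R).
  apply: eq_bigr => l _; rewrite /node_op restr_upd_other // agree_on_upd_other //.
  by case: (l == _); case: agree_on; rewrite /= ?mulr0 ?mulr1 ?mul0r.
by rewrite sum_mul_delta_r /node_op2 mulrA.
Qed.

End NodeOperators.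

Section Marginals.
Variables (C : numClosedFieldType) (N M d : nat) (node : halfedge M -> 'I_N).
Variables (rho : 'I_M -> op C ('I_d * 'I_d)%type)
          (A : forall n, 'I_2 -> op C (lconf d node n)).
Arguments A : clear implicits.
Hypothesis povmA : forall n, povm (A n).
Variable p : {ffun 'I_N -> 'I_2} -> C.
Hypothesis p_net : forall x, p x = network_prob rho A x.
Local Notation G := (gconf M d).
Local Notation restr := (restr node).

Lemma sum_povm n (l l' : lconf d node n) : \sum_y A n y l l' = (l == l')%:R.
Proof. by have [_ ->] := povmA n. Qed.

Lemma sum_network_prob (Q : 'I_N -> pred 'I_2) :
  \sum_(x : {ffun 'I_N -> 'I_2} | [forall n, Q n (x n)]) p x =
  \sum_(g : G) \sum_(g' : G)
    (\prod_n \sum_(y | Q n y) A n y (restr n g) (restr n g')) * global_state rho g' g.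
Proof.
under eq_bigr do rewrite p_net /network_prob.
rewrite exchange_big; apply: eq_bigr => g _; rewrite exchange_big; apply: eq_bigr => g' _.
rewrite -mulr_suml (bigA_distr_big_dep Q (fun n y => A n y (restr n g) (restr n g'))).
by congr (_ * _); apply: eq_bigl => x; apply/forallP/familyP.
Qed.

Lemma marg1_node_op a : marg1 p a =
  \sum_(g : G) \sum_(g' : G) node_op (A a 0) g g' * global_state rho g' g.
Proof.
rewrite /marg1 (eq_bigl (fun x : {ffun 'I_N -> 'I_2} =>
                          [forall n, (n == a) ==> (x n == 0)])); last first.
  move=> x; apply/idP/forallP => [/eqP xa0 n|H]; last by have /implyP := H a; apply.
  by apply/implyP => /eqP ->; rewrite xa0.
rewrite (sum_network_prob (fun n y => (n == a) ==> (y == 0))).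
apply: eq_bigr => g _; apply: eq_bigr => g' _; congr (_ * _).
rewrite (bigD1 a) //= eqxx /= big_pred1_eq /node_op; congr (_ * _).
rewrite -(prod_restr_eq C node (predC1 a)); apply: eq_bigr => n na.
by rewrite (negbTE na) /= sum_povm.
Qed.

Lemma marg2_node_op2 a b : a != b -> marg2 p a b =
  \sum_(g : G) \sum_(g' : G) node_op2 (A a 0) (A b 0) g g' * global_state rho g' g.
Proof.
move=> ab; rewrite /marg2 (eq_bigl (fun x : {ffun 'I_N -> 'I_2} =>
                           [forall n, ((n == a) || (n == b)) ==> (x n == 0)])); last first.
  move=> x; apply/idP/forallP => [/andP[/eqP xa0 /eqP xb0] n|H].
    by apply/implyP => /orP[] /eqP ->; rewrite ?xa0 ?xb0.
  by apply/andP; split; [have /implyP := H a | have /implyP := H b];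
    apply; rewrite eqxx ?orbT.
rewrite (sum_network_prob (fun n y => ((n == a) || (n == b)) ==> (y == 0))).
apply: eq_bigr => g _; apply: eq_bigr => g' _; congr (_ * _).
rewrite (bigD1 a) //= eqxx /= big_pred1_eq (bigD1 b) /=; last by rewrite eq_sym.
rewrite eqxx orbT big_pred1_eq /node_op2 mulrA; congr (_ * _).
rewrite -(prod_restr_eq C node (fun n => (n != a) && (n != b))).
by apply: eq_bigr => n /andP[na nb]; rewrite (negbTE na) (negbTE nb) /= sum_povm.
Qed.

Lemma node_op_povm1 a g g' :
  node_op (A a 1) g g' = (g == g')%:R - node_op (A a 0) g g'.
Proof.
rewrite -(node_op_id C node a) /node_op -mulrBl; congr (_ * _).
rewrite -sum_povm big_ord_recl big_ord1 (_ : lift ord0 ord0 = 1); last exact/val_inj.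
by rewrite addrC addKr.
Qed.

End Marginals.

Section Ampliation.
Variables (C : numClosedFieldType) (M d : nat) (J : finType).
Local Notation G := (gconf M d).
Local Notation Z := (pconf M d J).
Implicit Types (O : G -> G -> C) (K : Z -> Z -> C) (w : Z -> C).

(* An operator on the network's Hilbert space, tensored with the identity on
   the ancillas. *)
Definition ampl O (z z' : Z) : C := O z.1 z'.1 * (z.2 == z'.2)%:R.
Definition op_app K w : Z -> C := fun z => \sum_z' K z z' * w z'.

Lemma sum_pconf (F : Z -> C) : \sum_(z : Z) F z = \sum_(g : G) \sum_h F (g, h).
Proof. by rewrite (pair_bigA _ (fun g h => F (g, h))); apply: eq_bigr => -[]. Qed.

Lemma op_app_adj K u w : (forall z z', K z' z = (K z z')^*) ->
  dotf (op_app K u) w = dotf u (op_app K w).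
Proof.
move=> K_adj; rewrite /dotf /op_app.
under eq_bigr do rewrite rmorph_sum mulr_suml.
rewrite exchange_big /=; apply: eq_bigr => z' _.
rewrite mulr_sumr; apply: eq_bigr => z _.
by rewrite rmorphM /= -K_adj; ring.
Qed.

Lemma op_app_comp K1 K2 w :
  op_app K1 (op_app K2 w) = op_app (fun z z'' => \sum_z' K1 z z' * K2 z' z'') w.
Proof.
apply: functional_extensionality => z; rewrite /op_app.
under eq_bigr do rewrite mulr_sumr.
rewrite exchange_big /=; apply: eq_bigr => z'' _.
by rewrite mulr_suml; apply: eq_bigr => z' _; rewrite mulrA.
Qed.

Lemma op_app_subf K u w : op_app K (subf u w) = subf (op_app K u) (op_app K w).
Proof.
apply: functional_extensionality => z; rewrite /op_app /subf -sumrB.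
by apply: eq_bigr => z' _; rewrite mulrBr.
Qed.

Lemma eq_op_app K1 K2 w : K1 =2 K2 -> op_app K1 w = op_app K2 w.
Proof.
move=> eqK; apply: functional_extensionality => z.
by apply: eq_bigr => z' _; rewrite eqK.
Qed.

Lemma op_app_ampl O w z : op_app (ampl O) w z = \sum_g' O z.1 g' * w (g', z.2).
Proof.
rewrite /op_app sum_pconf; apply: eq_bigr => g' _.
rewrite (eq_bigr (fun h => (z.2 == h)%:R * (O z.1 g' * w (g', h)))) ?sum_mul_delta_l //.
by move=> h _; rewrite /ampl /=; ring.
Qed.

Lemma ampl_comp O1 O2 z z'' :
  \sum_z' ampl O1 z z' * ampl O2 z' z'' =
  ampl (fun g g'' => \sum_g' O1 g g' * O2 g' g'') z z''.
Proof.
rewrite sum_pconf /ampl mulr_suml; apply: eq_bigr => g' _ /=.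
rewrite (eq_bigr (fun h => (z.2 == h)%:R * (O1 z.1 g' * O2 g' z''.1 * (h == z''.2)%:R))).
  by rewrite sum_mul_delta_l.
by move=> h _; ring.
Qed.

Lemma ampl_adj O : (forall g g', O g' g = (O g g')^*) ->
  forall z z', ampl O z' z = (ampl O z z')^*.
Proof. by move=> O_adj z z'; rewrite /ampl rmorphM /= conjC_nat O_adj eq_sym. Qed.

Lemma ampl_psd O : (forall w : G -> C, 0 <= \sum_g \sum_g' (w g)^* * O g g' * w g') ->
  forall w, 0 <= dotf w (op_app (ampl O) w).
Proof.
move=> O_ge0 w.
have -> : dotf w (op_app (ampl O) w) =
    \sum_h \sum_g \sum_g' (w (g, h))^* * O g g' * w (g', h).
  rewrite /dotf sum_pconf exchange_big; apply: eq_bigr => h _; apply: eq_bigr => g _ /=.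
  by rewrite op_app_ampl mulr_sumr; apply: eq_bigr => g' _; rewrite mulrA.
by apply: sumr_ge0 => h _; apply: O_ge0.
Qed.

Lemma ampl_id z z' : ampl (fun g g' => (g == g')%:R) z z' = (z == z')%:R.
Proof.
case: z z' => g h [g' h']; rewrite /ampl /= xpair_eqE.
by case: (g == g'); case: (h == h'); rewrite ?mulr1 ?mulr0.
Qed.

Variables (L : 'I_M -> ('I_d * 'I_d) -> J -> C) (rho : 'I_M -> op C ('I_d * 'I_d)%type).
Hypothesis rho_L : forall m k k', rho m k k' = \sum_j L m k j * (L m k' j)^*.

Lemma trace_ancillas_Psi g g' :
  \sum_h (Psi L (g, h))^* * Psi L (g', h) = global_state rho g' g.
Proof.
transitivity (\sum_(h : {ffun 'I_M -> J}) \prod_m ((L m (g (m, false), g (m, true)) (h m))^* *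
    L m (g' (m, false), g' (m, true)) (h m))).
  by apply: eq_bigr => h _; rewrite /Psi rmorph_prod -big_split.
rewrite -(bigA_distr_bigA (fun m j => (L m (g (m, false), g (m, true)) j)^* *
    L m (g' (m, false), g' (m, true)) j)).
by apply: eq_bigr => m _; rewrite rho_L; apply: eq_bigr => j _; rewrite mulrC.
Qed.

Lemma dotf_Psi_ampl O : dotf (Psi L) (op_app (ampl O) (Psi L)) =
  \sum_(g : G) \sum_(g' : G) O g g' * global_state rho g' g.
Proof.
rewrite /dotf sum_pconf; apply: eq_bigr => g _ /=.
under eq_bigr do rewrite op_app_ampl mulr_sumr.
rewrite exchange_big /=; apply: eq_bigr => g' _.
by rewrite -trace_ancillas_Psi mulr_sumr; apply: eq_bigr => h _; ring.
Qed.

End Ampliation.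

Section Locality.
Variables (C : numClosedFieldType) (N M d : nat) (node : halfedge M -> 'I_N) (J : finType).
Local Notation Z := (pconf M d J).
Implicit Types (z : Z) (a : 'I_N).

Lemma eq_Psi_on (L : 'I_M -> ('I_d * 'I_d) -> J -> C) (U : {set 'I_M}) z z' :
  (forall m, m \in U -> src_conf z m = src_conf z' m) -> Psi_on L U z = Psi_on L U z'.
Proof. by move=> zz'; apply: eq_bigr => m _; case: ifP => // /zz' ->. Qed.

Lemma src_conf_upd_out a g (h : {ffun 'I_M -> J}) (l : lconf d node a) m :
  m \notin adj_sources node a -> src_conf (upd g l, h) m = src_conf (g, h) m.
Proof.
rewrite inE negb_or => /andP[m0 m1].
by rewrite /src_conf /= !ffunE !insubF //; apply/negbTE.
Qed.

Lemma eq_src_conf_upd a g g' (h h' : {ffun 'I_M -> J}) (l : lconf d node a) m :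
  src_conf (g, h) m = src_conf (g', h') m ->
  src_conf (upd g l, h) m = src_conf (upd g' l, h') m.
Proof.
rewrite /src_conf /= !ffunE => -[g0 g1 ->].
by case: insubP => [? _ _|_]; case: insubP => [? _ _|_]; rewrite ?g0 ?g1.
Qed.

Lemma eq_restr_adj a z z' :
  (forall m, m \in adj_sources node a -> src_conf z m = src_conf z' m) ->
  restr node a z.1 = restr node a z'.1.
Proof.
move=> zz'; apply/ffunP => -[[m b] /= sa]; rewrite !ffunE /=.
have /zz' [z0 z1 _] : m \in adj_sources node a.
  by rewrite inE; case: b sa => ->; rewrite ?orbT.
by case: b {sa}.
Qed.

End Locality.

Section CentredVectors.
Variables (C : numClosedFieldType) (N M d : nat) (node : halfedge M -> 'I_N).
Variables (rho : 'I_M -> op C ('I_d * 'I_d)%type)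
          (A : forall n, 'I_2 -> op C (lconf d node n)).
Arguments A : clear implicits.
Hypothesis povmA : forall n, povm (A n).
Variable p : {ffun 'I_N -> 'I_2} -> C.
Hypothesis p_net : forall x, p x = network_prob rho A x.
Variables (J : finType) (L : 'I_M -> ('I_d * 'I_d) -> J -> C).
Hypothesis rho_L : forall m k k', rho m k k' = \sum_j L m k j * (L m k' j)^*.
Hypothesis L_norm : forall m, \sum_k \sum_j L m k j * (L m k j)^* = 1.
Local Notation Z := (pconf M d J).
Local Notation Psi := (Psi L).
Local Notation restr := (restr node).
Local Notation adj_sources := (adj_sources node).

Definition effect a : Z -> Z -> C := ampl (node_op (A a 0)).
Definition effect_Psi a := op_app (effect a) Psi.
Definition centred a := subf (effect_Psi a) (scalef (marg1 p a) Psi).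

Lemma povm_adj a y i j : A a y j i = (A a y i j)^*.
Proof. by have [/(_ y) [-> _] _] := povmA a. Qed.

Lemma effect_adj a z z' : effect a z' z = (effect a z z')^*.
Proof. by apply: ampl_adj => g g'; apply: node_op_adj => i j; exact: povm_adj. Qed.

Lemma marg1_dotf a : marg1 p a = dotf Psi (effect_Psi a).
Proof. by rewrite (marg1_node_op povmA p_net) /effect_Psi /effect (dotf_Psi_ampl rho_L). Qed.

Lemma conj_marg1 a : (marg1 p a)^* = marg1 p a.
Proof. by rewrite marg1_dotf conj_dotf /effect_Psi (op_app_adj _ _ (@effect_adj a)). Qed.

Lemma marg2_dotf a b : a != b -> marg2 p a b = dotf (effect_Psi a) (effect_Psi b).
Proof.
move=> ab; rewrite /effect_Psi (op_app_adj _ _ (@effect_adj a)) op_app_comp.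
rewrite (marg2_node_op2 povmA p_net ab) -(dotf_Psi_ampl rho_L); congr dotf.
by apply: eq_op_app => z z''; rewrite /effect ampl_comp /ampl node_op_comp.
Qed.

Lemma op_app_effect_compl a (w : Z -> C) :
  op_app (ampl (node_op (A a 1))) w = subf w (op_app (effect a) w).
Proof.
apply: functional_extensionality => z; rewrite /op_app /subf.
rewrite (eq_bigr (fun z' => (z == z')%:R * w z' - effect a z z' * w z')).
  by rewrite sumrB sum_mul_delta_l.
move=> z' _; rewrite -ampl_id /ampl /effect /ampl (node_op_povm1 povmA).
by rewrite -mulrBl; ring.
Qed.

(* [0 <= E_a <= 1] gives [<E_a Psi, E_a Psi> <= <Psi, E_a Psi>]. *)
Lemma dotf_effect_Psi_le a : dotf (effect_Psi a) (effect_Psi a) <= marg1 p a.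
Proof.
rewrite marg1_dotf; set u := effect_Psi a.
have [povm_psd _] := povmA a.
have ge0_0 := ampl_psd (node_op_psd (povm_psd 0)) (subf Psi u).
have ge0_1 := ampl_psd (node_op_psd (povm_psd 1)) u.
rewrite op_app_effect_compl in ge0_1; rewrite -/(effect a) op_app_subf -/u in ge0_0.
rewrite -subr_ge0.
have -> : dotf Psi u - dotf u u =
    dotf (subf Psi u) (subf u (op_app (effect a) u)) + dotf u (subf u (op_app (effect a) u)).
  by rewrite dotf_subl addrNK dotf_subr -(op_app_adj _ _ (@effect_adj a)).
exact: addr_ge0.
Qed.

Lemma dotf_effect_Psi_Psi a : dotf (effect_Psi a) Psi = marg1 p a.
Proof. by rewrite -conj_dotf -marg1_dotf conj_marg1. Qed.

Lemma dotf_Psi_centred a : dotf Psi (centred a) = 0.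
Proof. by rewrite dotf_subr dotf_scaler (dotf_Psi L_norm) -marg1_dotf mulr1 subrr. Qed.

Lemma corr_mx_offdiag a b : a != b -> corr_mx p a b = dotf (centred a) (centred b).
Proof.
move=> ab; rewrite /corr_mx mxE (negbTE ab) (marg2_dotf ab).
rewrite dotf_subl !dotf_subr !dotf_scalel !dotf_scaler dotf_effect_Psi_Psi.
by rewrite -!marg1_dotf (dotf_Psi L_norm) conj_marg1; ring.
Qed.

Lemma corr_mx_diag_ge a : dotf (centred a) (centred a) <= corr_mx p a a.
Proof.
rewrite /corr_mx mxE eqxx dotf_subl !dotf_subr !dotf_scalel !dotf_scaler.
rewrite dotf_effect_Psi_Psi -!marg1_dotf (dotf_Psi L_norm) conj_marg1 -subr_ge0.
set q := marg1 p a; set e := dotf (effect_Psi a) (effect_Psi a).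
have -> : q * (1 - q) - (e - q * q - (q * q - q * (q * 1))) = q - e by ring.
by rewrite subr_ge0 dotf_effect_Psi_le.
Qed.

Lemma srcproj_setT_centred a : srcproj L setT (centred a) = fun=> 0.
Proof.
rewrite srcproj_setT dotf_Psi_centred.
by apply: functional_extensionality => z; rewrite mulr0.
Qed.



(* Outside the sources adjacent to [a], [centred a] is the product of the
   pure source states. *)
Lemma srcproj_centred a : srcproj L (~: adj_sources a) (centred a) = centred a.
Proof.
set T := ~: adj_sources a.
set f := fun z : Z => \sum_(l : lconf d node a) A a 0 (restr a z.1) l *
   Psi_on L (~: T) (upd z.1 l, z.2).
have Psi_on_upd (z : Z) (l : lconf d node a) : Psi_on L T (upd z.1 l, z.2) = Psi_on L T z.
  by apply: eq_Psi_on => m; rewrite inE; case: z => g h /=; exact: src_conf_upd_out.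
have -> : centred a = fun z => Psi_on L T z * (f z - marg1 p a * Psi_on L (~: T) z).
  apply: functional_extensionality => z.
  rewrite /centred /subf /scalef /effect_Psi /effect op_app_ampl sum_node_op.
  rewrite (Psi_split L T z) mulrBr mulrA [_ * Psi_on L T z]mulrC -mulrA; congr (_ - _).
  rewrite /f mulr_sumr; apply: eq_bigr => l _.
  by rewrite (Psi_split L T) Psi_on_upd mulrCA.
rewrite (srcproj_Psi_on L_norm) // => z z' zz'.
have zz'_adj m : m \in adj_sources a -> src_conf z m = src_conf z' m.
  by move=> ma; apply: zz'; rewrite inE negbK.
have Psi_on_adj : forall z1 z2 : Z,
    (forall m, m \in adj_sources a -> src_conf z1 m = src_conf z2 m) ->
    Psi_on L (~: T) z1 = Psi_on L (~: T) z2.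
  by move=> z1 z2 z12; apply: eq_Psi_on => m; rewrite setCK => /z12.
rewrite (Psi_on_adj z z') // /f (eq_restr_adj zz'_adj); congr (_ - _).
apply: eq_bigr => l _; congr (_ * _); apply: Psi_on_adj => m ma.
move: (zz'_adj m ma); case: z {zz' zz'_adj} => g h; case: z' => g' h'.
exact: eq_src_conf_upd.
Qed.

Lemma corr_mx_offdiag_bound (t : 'I_N -> C) : (forall a, 0 <= t a) ->
  \sum_a \sum_(b | b != a) `|corr_mx p a b| * (t a * t b)
    <= \sum_a corr_mx p a a * t a ^+ 2.
Proof.
move=> t_ge0.
have := sum_offdiag_dotf_le (srcproj_adj L) (srcproj_comp L_norm) srcproj_setT_centred
  srcproj_centred (adj_sources3_disjoint node) t_ge0.
under [X in X <= _ -> _]eq_bigr => a _.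
  under eq_bigr => b ba do rewrite -corr_mx_offdiag 1?eq_sym //.
over.
move/le_trans; apply; apply: ler_sum => a _.
by rewrite ler_wpM2r ?exprn_ge0 ?corr_mx_diag_ge.
Qed.

End CentredVectors.

Section GramFactor.
Local Open Scope sesquilinear_scope.
Variables (C : numClosedFieldType) (T : finType) (R : op C T).
Local Notation n := #|T|.

Definition opmx : 'M[C]_n := \matrix_(i, j) R (enum_val i) (enum_val j).
Let U := spectralmx opmx.
Let D := spectral_diag opmx.

(* [R = L L^*] with [L = U^* sqrt(D)], from the spectral decomposition
   [opmx = U^* diag(D) U]. *)
Definition gram_factor (t : T) (j : 'I_n) : C := (U j (enum_rank t))^* * sqrtC (D 0 j).

Lemma sum_enum_val (F : T -> C) : \sum_t F t = \sum_(i < n) F (enum_val i).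
Proof.
rewrite (reindex (@enum_val _ (mem T))) //.
by exists (@enum_rank T) => x _; [exact: enum_valK | exact: enum_rankK].
Qed.

Hypothesis R_psd : psd R.

Lemma opmx_spectral : opmx = U ^t* *m diag_mx D *m U.
Proof.
have opmx_herm : opmx ^t* = opmx.
  by apply/matrixP => i j; rewrite !mxE R_psd.1 conjCK.
have /orthomx_spectralP opmxE : opmx \is normalmx by apply/normalmxP; rewrite opmx_herm.
by rewrite {1}opmxE invmx_unitary ?spectral_unitarymx.
Qed.

Lemma spectral_diag_ge0 j : 0 <= D 0 j.
Proof.
have UUt : U *m U ^t* = 1%:M by exact/unitarymxP/spectral_unitarymx.
have -> : D 0 j = (U *m opmx *m U ^t*) j j.
  by rewrite opmx_spectral !mulmxA UUt mul1mx -mulmxA UUt mulmx1 mxE eqxx mulr1n.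
suff -> : (U *m opmx *m U ^t*) j j =
    \sum_t \sum_t' ((U j (enum_rank t))^*)^* * R t t' * (U j (enum_rank t'))^*.
  exact: R_psd.2.
rewrite sum_enum_val; under [RHS]eq_bigr do rewrite sum_enum_val.
rewrite mxE [RHS]exchange_big; apply: eq_bigr => i _ /=.
rewrite !mxE mulr_suml; apply: eq_bigr => k _.
by rewrite !mxE !enum_valK conjCK.
Qed.

Lemma gram_factorP t t' : R t t' = \sum_j gram_factor t j * (gram_factor t' j)^*.
Proof.
have -> : R t t' = opmx (enum_rank t) (enum_rank t') by rewrite mxE !enum_rankK.
rewrite opmx_spectral mxE; apply: eq_bigr => j _.
rewrite mul_mx_diag !mxE /gram_factor rmorphM /= conjCK.
rewrite (conj_Creal (sqrtC_real (spectral_diag_ge0 j))) -{1}(sqrtCK (D 0 j)).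
by ring.
Qed.

Lemma gram_factor_norm : trace R = 1 ->
  \sum_t \sum_j gram_factor t j * (gram_factor t j)^* = 1.
Proof. by move=> <-; apply: eq_bigr => t _; rewrite gram_factorP. Qed.

End GramFactor.

Section ComparisonMatrix.
Variables (C : numClosedFieldType) (N : nat) (X : 'M[C]_N).

Lemma comparison_mx_form (v : 'rV[C]_N) :
  \sum_j (v *m comparison_mx X) 0 j * (v 0 j)^* =
  \sum_j `|X j j| * `|v 0 j| ^+ 2 - \sum_j \sum_(i | i != j) `|X i j| * (v 0 i * (v 0 j)^*).
Proof.
rewrite -sumrB; apply: eq_bigr => j _.
rewrite mxE mulr_suml (bigD1 j) //= /comparison_mx mxE eqxx normCK -mulrA mulrCA.
congr (_ + _).
rewrite -sumrN; apply: eq_bigr => i ij.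
by rewrite mxE (negbTE ij); ring.
Qed.

Hypothesis X_diag_ge0 : forall a, 0 <= X a a.
Hypothesis X_offdiag_bound : forall t : 'I_N -> C, (forall a, 0 <= t a) ->
  \sum_a \sum_(b | b != a) `|X a b| * (t a * t b) <= \sum_a X a a * t a ^+ 2.

Lemma eigenvalue_comparison_mx_ge0 lam :
  lam \is Num.real -> eigenvalue (comparison_mx X) lam -> 0 <= lam.
Proof.
move=> lam_real /eigenvalueP[v v_eig v_neq0].
set t := fun a => `|v 0 a|; set r := \sum_j t j ^+ 2.
have r_gt0 : 0 < r.
  have [j vj_neq0] : exists j, v 0 j != 0.
    have [j vj|v0] := pickP (fun j => v 0 j != 0); first by exists j.
    by case/eqP: v_neq0; apply/rowP => k; rewrite mxE; apply/eqP/negbFE/v0.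
  rewrite /r (bigD1 j) //= ltr_pwDl ?exprn_gt0 ?normr_gt0 //.
  by apply: sumr_ge0 => i _; exact/exprn_ge0/normr_ge0.
set Off := \sum_j \sum_(i | i != j) `|X i j| * (v 0 i * (v 0 j)^*).
have lamr : lam * r = \sum_j X j j * t j ^+ 2 - Off.
  rewrite (eq_bigr (fun j => `|X j j| * t j ^+ 2)) => [|j _]; last by rewrite ger0_norm.
  rewrite -comparison_mx_form v_eig /r mulr_sumr; apply: eq_bigr => j _.
  by rewrite !mxE /t normCK mulrA.
have Off_le : `|Off| <= \sum_j X j j * t j ^+ 2.
  apply: le_trans (X_offdiag_bound (fun a => normr_ge0 (v 0 a))).
  rewrite sum_offdiag_swap; apply: le_trans (ler_norm_sum _ _ _) _.
  apply: ler_sum => j _; apply: le_trans (ler_norm_sum _ _ _) _.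
  by apply: ler_sum => i _; rewrite !normrM normr_id norm_conjC.
have diag_ge0 : 0 <= \sum_j X j j * t j ^+ 2.
  by apply: sumr_ge0 => j _; rewrite mulr_ge0 ?X_diag_ge0 ?exprn_ge0 ?normr_ge0.
have Off_real : Off \is Num.real.
  have -> : Off = \sum_j X j j * t j ^+ 2 - lam * r by rewrite lamr; ring.
  by rewrite rpredB ?(ger0_real diag_ge0) ?rpredM ?(ger0_real (ltW r_gt0)).
have : 0 <= lam * r.
  by rewrite lamr subr_ge0; apply: le_trans Off_le; exact: real_ler_norm Off_real.
by rewrite pmulr_lge0.
Qed.

End ComparisonMatrix.

Theorem mainTheorem3 (C : numClosedFieldType) (N : nat)
    (p : {ffun 'I_N -> 'I_2} -> C) :
  (exists lam : C, lam < 0 /\ eigenvalue (comparison_mx (corr_mx p)) lam) ->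
  ~ bipartite_qnet_compatible p.
Proof.
(* The two ends of a source need not be distinct nodes. *)
move=> [lam [lam_lt0 eig]] [M [d [node [_ [rho [A [rho_dens [povmA p_net]]]]]]]].
pose L m := gram_factor (rho m).
have rho_L m : forall k k', rho m k k' = \sum_j L m k j * (L m k' j)^*.
  exact: gram_factorP (rho_dens m).1.
have L_norm m : \sum_k \sum_j L m k j * (L m k j)^* = 1.
  exact: gram_factor_norm (rho_dens m).1 (rho_dens m).2.
have diag_ge0 a : 0 <= corr_mx p a a.
  exact: le_trans (dotf_ge0 _) (corr_mx_diag_ge povmA p_net rho_L L_norm a).
have := eigenvalue_comparison_mx_ge0 diag_ge0
  (corr_mx_offdiag_bound povmA p_net rho_L L_norm) (ltr0_real lam_lt0) eig.
by rewrite lt_geF.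
Qed.
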